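(* The groups $\mathbb{G}_r(N)$, for $(r,N)\in\{1,\infty\}\times\{0,2,3,4,\ldots\}$, are pairwise nonisomorphic as topological groups.
   Context: All groups are Abelian. A value on $G$ is $p\colon G\to[0,\infty)$ with $p(x)=0\iff x=0$, $p(-x)=p(x)$, $p(x+y)\leqslant p(x)+p(y)$; it induces the metric $p(x-y)$ and hence a group topology. Class $\mathcal{O}_0$: $\lim_n p(na)/n=0$ for all $a$. $\mathfrak{G}_r(N)$: separable valued Abelian groups of class $\mathcal{O}_0$ with $p\leqslant r$ (vacuous if $r=\infty$) and of exponent $N$ if $N\neq0$. $\mathbb{G}_r(N)$ is the valued Abelian group, unique up to isometric group isomorphism, which (G1) is complete and in $\mathfrak{G}_r(N)$; (G2) for every finite valued Abelian group $(H,+,q)$ (of exponent $N$ if $N\neq0$) with $q\leqslant r$, subgroup $K$, isometric homomorphism $\varphi\colon K\to\mathbb{G}_r(N)$ and $\varepsilon\in(0,1)$, there is a homomorphism $\varphi_\varepsilon\colon H\to\mathbb{G}_r(N)$ with $p(\varphi(x)-\varphi_\varepsilon(x))\leqslant\varepsilon$ on $K$ and $(1-\varepsilon)q\leqslant p\circ\varphi_\varepsilon\leqslant(1+\varepsilon)q$ on $H$; (G3) if $N=0$, finite-order elements are dense. *)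

From HB Require Import structures.
From mathcomp Require Import all_boot all_order all_algebra.
From mathcomp Require Import Rstruct.
Set Implicit Arguments. Unset Strict Implicit. Unset Printing Implicit Defensive.
Import Order.TTheory GRing.Theory Num.Theory.
Local Open Scope ring_scope.

Notation R := Rdefinitions.R.

Definition is_value (G : zmodType) (p : G -> R) : Prop :=
  (forall x, 0 <= p x) /\
  (forall x, p x = 0 <-> x = 0) /\
  (forall x, p (- x) = p x) /\
  (forall x y, p (x + y) <= p x + p y).

Definition class_O0 (G : zmodType) (p : G -> R) : Prop :=
  forall (a : G) (eps : R), 0 < eps ->
    exists M : nat, forall n : nat, (M <= n)%N -> p (a *+ n) / n%:R < eps.

Definition separable_val (G : zmodType) (p : G -> R) : Prop :=
  exists s : nat -> G, forall (x : G) (eps : R), 0 < eps ->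
    exists k : nat, p (x - s k) < eps.

Definition complete_val (G : zmodType) (p : G -> R) : Prop :=
  forall u : nat -> G,
    (forall eps : R, 0 < eps -> exists M : nat, forall m n : nat,
        (M <= m)%N -> (M <= n)%N -> p (u m - u n) < eps) ->
    exists l : G, forall eps : R, 0 < eps ->
      exists M : nat, forall n : nat, (M <= n)%N -> p (u n - l) < eps.

Inductive radius := r_one | r_inf.

Definition bounded_by (r : radius) (G : zmodType) (p : G -> R) : Prop :=
  match r with
  | r_one => forall x, p x <= 1
  | r_inf => True
  end.

Definition exponent_cond (N : nat) (G : zmodType) : Prop :=
  N <> 0%N -> forall x : G, x *+ N = 0.

Definition is_subgroup (H : zmodType) (K : H -> Prop) : Prop :=
  K 0 /\ (forall x y, K x -> K y -> K (x - y)).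

Definition prop_G1 (r : radius) (N : nat) (G : zmodType) (p : G -> R) : Prop :=
  is_value p /\ complete_val p /\ separable_val p /\ class_O0 p /\
  bounded_by r p /\ exponent_cond N G.

Definition prop_G2 (r : radius) (N : nat) (G : zmodType) (p : G -> R) : Prop :=
  forall (H : finZmodType) (q : H -> R),
    is_value q -> bounded_by r q -> exponent_cond N H ->
    forall (K : H -> Prop), is_subgroup K ->
    forall (phi : H -> G),
      (forall x y, K x -> K y -> phi (x + y) = phi x + phi y) ->
      (forall x y, K x -> K y -> p (phi x - phi y) = q (x - y)) ->
    forall eps : R, 0 < eps -> eps < 1 ->
      exists psi : H -> G,
        (forall x y, psi (x + y) = psi x + psi y) /\
        (forall x, K x -> p (phi x - psi x) <= eps) /\
        (forall x, (1 - eps) * q x <= p (psi x) /\ p (psi x) <= (1 + eps) * q x).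

Definition prop_G3 (N : nat) (G : zmodType) (p : G -> R) : Prop :=
  N = 0%N ->
  forall (x : G) (eps : R), 0 < eps ->
    exists y : G, (exists n : nat, (0 < n)%N /\ y *+ n = 0) /\ p (x - y) < eps.

(* (G, p) is (isometrically isomorphic to) the group G_r(N). *)
Definition is_Gr (r : radius) (N : nat) (G : zmodType) (p : G -> R) : Prop :=
  prop_G1 r N p /\ prop_G2 r N p /\ prop_G3 N p.

Definition val_continuous (G G' : zmodType) (p : G -> R) (p' : G' -> R)
    (f : G -> G') : Prop :=
  forall (x : G) (eps : R), 0 < eps ->
    exists delta : R, 0 < delta /\
      forall y : G, p (y - x) < delta -> p' (f y - f x) < eps.

Definition top_group_isomorphic (G G' : zmodType) (p : G -> R) (p' : G' -> R)
  : Prop :=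
  exists (f : G -> G') (g : G' -> G),
    cancel f g /\ cancel g f /\
    (forall x y, f (x + y) = f x + f y) /\
    val_continuous p p' f /\ val_continuous p' p g.

From HB Require Import structures.
From mathcomp Require Import all_boot all_order all_algebra.
From mathcomp Require Import Rstruct.
From mathcomp Require Import zify ring lra.
Set Implicit Arguments. Unset Strict Implicit.
Import Order.TTheory GRing.Theory Num.Theory.
Local Open Scope ring_scope.

(* The exponent is an algebraic invariant: G_r(N) has exponent N and, by (G2)
   applied to a discretely valued cyclic group, elements of every order m > 1
   dividing N.  The radius is a topological invariant: by the same device
   G_oo(N) contains elements of arbitrarily large value, whereas every
   continuous homomorphism out of G_1(N) is bounded, because (G2) lets one
   halve torsion elements of G_1(N) and these are dense. *)

Definition torsion (G : zmodType) (x : G) : Prop :=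
  exists m, (0 < m)%N /\ x *+ m = 0.

Definition exact_order (G : zmodType) (x : G) (m : nat) : Prop :=
  x *+ m = 0 /\ forall j, (0 < j < m)%N -> x *+ j <> 0.

Definition exact_exponent (N : nat) (G : zmodType) : Prop :=
  exponent_cond N G /\
  forall m, (1 < m)%N -> (m %| N)%N -> exists y : G, exact_order y m.

Section Additive.
Variables (G G' : zmodType) (f : G -> G').
Hypothesis fD : forall x y, f (x + y) = f x + f y.

Lemma additive0 : f 0 = 0.
Proof. by apply/(addrI (f 0)); rewrite -fD !addr0. Qed.

Lemma additiveN x : f (- x) = - f x.
Proof. by apply/(addrI (f x)); rewrite -fD !subrr additive0. Qed.

Lemma additiveB x y : f (x - y) = f x - f y.
Proof. by rewrite fD additiveN. Qed.

Lemma additiveMn x n : f (x *+ n) = f x *+ n.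
Proof. by elim: n => [|n IH]; rewrite ?mulr0n ?additive0 // !mulrS fD IH. Qed.

Lemma additive_inj : (forall x, f x = 0 -> x = 0) -> injective f.
Proof.
move=> f0 x y fxy; apply/eqP; rewrite -subr_eq0; apply/eqP/f0.
by rewrite additiveB fxy subrr.
Qed.

Lemma cancel_additive (g : G' -> G) : cancel f g -> cancel g f ->
  forall x y, g (x + y) = g x + g y.
Proof. by move=> fK gK x y; apply: (can_inj fK); rewrite fD !gK. Qed.

Lemma exact_order_inj x m : injective f -> exact_order x m -> exact_order (f x) m.
Proof.
move=> f_inj [xm xj]; split; first by rewrite -additiveMn xm additive0.
by move=> j /xj xj0; rewrite -additiveMn -additive0 => /f_inj.
Qed.

Lemma exponent_cond_surj (g : G' -> G) N :
  cancel g f -> exponent_cond N G -> exponent_cond N G'.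
Proof. by move=> gK GN N0 y; rewrite -[y]gK -additiveMn GN // additive0. Qed.

End Additive.

Section Torsion.
Variable G : zmodType.
Implicit Types (x : G) (m n : nat).

Lemma mulrn_modn x m n : x *+ m = 0 -> x *+ (n %% m) = x *+ n.
Proof. by move=> xm; rewrite {2}(divn_eq n m) mulrnDr mulnC mulrnA xm mul0rn add0r. Qed.

Lemma exact_order_dvdn x m n : (0 < m)%N -> exact_order x m -> x *+ n = 0 ->
  (m %| n)%N.
Proof.
move=> m0 [xm xj] xn; apply/negPn/negP; rewrite /dvdn -lt0n => nm0.
by have := xj (n %% m)%N; rewrite nm0 ltn_pmod // mulrn_modn // xn; apply.
Qed.

Lemma torsion_exact_order x : torsion x -> exists d, exact_order x d.+1.
Proof.
move=> [n [n0 xn]].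
have xP : exists m, (0 < m)%N && (x *+ m == 0) by exists n; rewrite n0 xn eqxx.
case: (ex_minnP xP) => [[//|d] /andP[_ /eqP xd] dmin]; exists d; split=> // j.
by move=> /andP[j0 jd] xj; have := dmin j; rewrite j0 xj eqxx => /(_ isT); lia.
Qed.

Lemma exact_exponent_dvdn N N' : exact_exponent N G -> exact_exponent N' G ->
  (N' %| N)%N.
Proof.
move=> [GN _] [_ GN'].
case: N' GN' => [|[|N'] GN'] //.
- case: N GN => [//|N] /(_ ltac:(by [])) GN /(_ N.+2 isT (dvdn0 _)) [y yN].
  have := exact_order_dvdn (ltn0Sn _) yN (GN y).
  by move=> /(dvdn_leq (ltn0Sn N)); rewrite ltnn.
- have [y yN'] := GN' N'.+2 isT (dvdnn _).
  case: N GN => [|N /(_ ltac:(by [])) GN]; first by rewrite dvdn0.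
  exact: exact_order_dvdn (ltn0Sn _) yN' (GN y).
Qed.

End Torsion.

Lemma exact_exponent_iso (G G' : zmodType) (f : G -> G') (g : G' -> G) N :
  (forall x y, f (x + y) = f x + f y) -> cancel f g -> cancel g f ->
  exact_exponent N G -> exact_exponent N G'.
Proof.
move=> fD fK gK [GN Gm]; split; first exact: exponent_cond_surj gK GN.
by move=> m m1 mN; have [y ym] := Gm m m1 mN; exists (f y);
  apply: exact_order_inj (can_inj fK) ym.
Qed.

Lemma exponent_cond_ord n N : (n.+1 %| N)%N -> exponent_cond N 'I_n.+1.
Proof. by move=> nN _ x; apply/val_inj; rewrite Zp_mulrn /=; apply/eqP/dvdn_mull. Qed.

(* MathComp does not declare the product of two finite Z-modules a [finZmodType]. *)
HB.instance Definition _ (H : finZmodType) := GRing.Zmodule.on (H * H)%type.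

Lemma exponent_cond_pair (H : zmodType) N :
  exponent_cond N H -> exponent_cond N (H * H)%type.
Proof. by move=> HN N0 v; rewrite pairMnE !HN. Qed.

Section Value.
Variables (G : zmodType) (p : G -> R).
Hypothesis pv : is_value p.

Lemma value_ge0 x : 0 <= p x.
Proof. by case: pv. Qed.

Lemma value0 : p 0 = 0.
Proof. by case: pv => _ [/(_ 0) [_ ->]]. Qed.

Lemma value_eq0 x : p x = 0 -> x = 0.
Proof. by case: pv => _ [/(_ x) [+ _]]. Qed.

Lemma valueD x y : p (x + y) <= p x + p y.
Proof. by case: pv => _ [_ [_]]. Qed.

Lemma value_le_addB x y : p y <= p x + p (x - y).
Proof.
case: pv => _ [_ [pN _]]; rewrite -(pN (x - y)) opprB.
by have := valueD x (y - x); rewrite addrC subrK.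
Qed.

Lemma value_comp (H : zmodType) (phi : H -> G) :
  (forall x y, phi (x + y) = phi x + phi y) -> injective phi ->
  is_value (p \o phi).
Proof.
move=> phiD phi_inj; case: (pv) => _ [_ [pN _]].
split=> [x|]; first exact: value_ge0.
split; [|split] => [x|x|x y] /=.
- split=> [/value_eq0 phix0|->]; last by rewrite (additive0 phiD) value0.
  by apply: phi_inj; rewrite phix0 (additive0 phiD).
- by rewrite (additiveN phiD) pN.
- by rewrite phiD valueD.
Qed.

End Value.

Lemma value_mean (H : zmodType) (w : H -> R) : is_value w ->
  is_value (fun v : H * H => (w v.1 + w v.2) / 2).
Proof.
move=> wv; have w0 := value_ge0 wv; case: (wv) => _ [_ [wN wD]].
split=> [v|]; first by have := w0 v.1; have := w0 v.2; lra.
split; [|split] => [[a b]|v|u v] /=.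
- split=> [ab0|[-> ->]]; last by rewrite value0 //; lra.
  have := w0 a; have := w0 b => wb wa.
  have wa0 : w a = 0 by lra.
  have wb0 : w b = 0 by lra.
  by rewrite (value_eq0 wv wa0) (value_eq0 wv wb0).
- by rewrite !wN.
- by have := wD u.1 v.1; have := wD u.2 v.2; lra.
Qed.

Definition discrete_value (H : zmodType) (c : R) (h : H) : R :=
  if h == 0 then 0 else c.

Lemma discrete_value_is_value (H : zmodType) (c : R) : 0 < c ->
  is_value (@discrete_value H c).
Proof.
move=> c0; rewrite /discrete_value; split=> [x|]; first by case: ifP; lra.
split=> [x|]; first by case: eqP => // x0; split=> // c_eq0; rewrite c_eq0 ltxx in c0.
split=> [x|x y]; first by rewrite oppr_eq0.
case: (eqVneq x 0) => [->|_]; first by rewrite add0r; case: ifP; lra.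
case: (eqVneq y 0) => [->|_]; first by rewrite addr0; case: ifP; lra.
by case: ifP; lra.
Qed.

Lemma bounded_by_discrete_value (r : radius) (H : zmodType) (c : R) :
  c <= 1 -> bounded_by r (@discrete_value H c).
Proof. by case: r => //= c1 x; rewrite /discrete_value; case: ifP; lra. Qed.

Section G2.
Variables (r : radius) (N : nat) (G : zmodType) (p : G -> R).
Hypotheses (pv : is_value p) (G2 : prop_G2 r N p).

(* Extend the zero map on the trivial subgroup of ['I_k.+2], valued discretely by [c]. *)
Lemma G2_separated_cyclic (k : nat) (c : R) :
  (k.+2 %| N)%N -> 0 < c -> bounded_by r (@discrete_value 'I_k.+2 c) ->
  exists y : G, y *+ k.+2 = 0 /\ forall j, (0 < j < k.+2)%N -> c / 2 <= p (y *+ j).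
Proof.
move=> kN c0 cb.
have K0 : is_subgroup (fun h : 'I_k.+2 => h = 0) by split=> // x y -> ->; rewrite subr0.
have zeroD (x y : 'I_k.+2) : x = 0 -> y = 0 -> (0 : G) = 0 + 0 by rewrite addr0.
have zero_iso (x y : 'I_k.+2) : x = 0 -> y = 0 -> p (0 - 0) = discrete_value c (x - y).
  by move=> -> ->; rewrite !subr0 value0 // /discrete_value eqxx.
have [e0 e1] : 0 < 1 / 2 :> R /\ 1 / 2 < 1 :> R by split; lra.
have [psi [psiD [_ psi_iso]]] := G2 (discrete_value_is_value _ c0) cb
  (exponent_cond_ord kN) K0 zeroD zero_iso e0 e1.
exists (psi 1); split.
  by rewrite -(additiveMn psiD) -(additive0 psiD); congr psi; apply/val_inj;
    rewrite Zp_mulrn /= mul1n modnn.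
move=> j /andP[j0 jk]; rewrite -(additiveMn psiD).
have [+ _] := psi_iso (1 *+ j); rewrite /discrete_value.
case: eqP => [/(congr1 val)|_]; last lra.
by rewrite Zp_mulrn /= mul1n modn_small // => j_eq0; rewrite j_eq0 in j0.
Qed.

Lemma G2_exact_order (m : nat) : (1 < m)%N -> (m %| N)%N -> exists y : G, exact_order y m.
Proof.
case: m => [|[|k]] // _ kN.
have [y [yk yj]] := G2_separated_cyclic kN ltr01 (bounded_by_discrete_value _ _ (lexx 1)).
exists y; split=> // j /yj + yj0; rewrite yj0 value0 //; lra.
Qed.

End G2.

Lemma Gr_exact_exponent (r : radius) (N : nat) (G : zmodType) (p : G -> R) :
  is_Gr r N p -> exact_exponent N G.
Proof.
case=> [[pv [_ [_ [_ [_ GN]]]]] [G2 _]]; split=> // m.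
exact: G2_exact_order pv G2 m.
Qed.

Lemma exists_dvdn_gt1 (N : nat) : N <> 1%N -> exists k, (k.+2 %| N)%N.
Proof. by case: N => [|[|n]] // _; [exists 0%N | exists n]. Qed.

Lemma G2_inf_unbounded (N : nat) (G : zmodType) (p : G -> R) :
  N <> 1%N -> is_value p -> prop_G2 r_inf N p -> forall B : R, exists y, B < p y.
Proof.
move=> N1 pv G2 B; have [k kN] := exists_dvdn_gt1 N1.
have c0 : 0 < 2 * (`|B| + 1) by have := normr_ge0 B; lra.
have [y [_ yj]] := G2_separated_cyclic pv G2 kN c0 I.
by exists y; have := yj 1%N isT; rewrite mulr1n; have := ler_norm B; lra.
Qed.

Lemma Gr_torsion_dense (r : radius) (N : nat) (G : zmodType) (p : G -> R) :
  is_Gr r N p -> forall (x : G) (eps : R), 0 < eps ->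
  exists y, torsion y /\ p (x - y) < eps.
Proof.
case=> [[pv [_ [_ [_ [_ GN]]]]] [_ G3]] x eps e0.
case: (eqVneq N 0%N) => [N0|/eqP N0]; first exact: G3.
exists x; rewrite subrr value0 //; split=> //.
by exists N; rewrite lt0n (GN N0); split=> //; apply/eqP.
Qed.

Lemma exists_exprn_ge (F : archiRealFieldType) (a b : F) : 1 < a ->
  exists n, b <= a ^+ n.
Proof.
move=> a1; set t := a - 1.
have t0 : 0 < t by rewrite subr_gt0.
have bern n : 1 + n%:R * t <= a ^+ n.
  elim: n => [|n IH]; first by rewrite mul0r addr0 expr0.
  have at1 : a = t + 1 by rewrite subrK.
  rewrite exprS -natr1 {1}at1; have := mulr_ge0 (ltW t0) (ler0n F n); nra.
have bt0 : 0 <= `|b| / t by rewrite divr_ge0 // ltW.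
exists (Num.Def.archi_bound (`|b| / t)); apply: le_trans (bern _).
have := archi_boundP bt0; rewrite ltr_pdivrMr // => bt.
by have := ler_norm b; lra.
Qed.

Section UnitBall.
Variables (N : nat) (G : zmodType) (p : G -> R).
Hypothesis Gp : is_Gr r_one N p.

(* Realise [x] as the diagonal of [<x> * <x>] with the mean value; (G2) then
   splits [x] into the images of the two coordinate generators. *)
Lemma Gr_one_halving (x : G) (eps : R) : torsion x -> 0 < eps -> eps < 1 ->
  exists y z : G, [/\ torsion y, torsion z, p y <= (1 + eps) * (p x / 2),
    p z <= (1 + eps) * (p x / 2) & p (x - (y + z)) <= eps].
Proof.
case: Gp => [[pv [_ [_ [_ [pb GN]]]]] [G2 _]] xt e0 e1.
have [d xd] := torsion_exact_order xt; have [xd0 xj] := xd.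
have dN : (d.+1 %| N)%N.
  case: (eqVneq N 0%N) => [->|/eqP N0]; first exact: dvdn0.
  exact: exact_order_dvdn (ltn0Sn d) xd (GN N0 x).
pose cyc (a : 'I_d.+1) := x *+ a.
have cycD a b : cyc (a + b) = cyc a + cyc b by rewrite /cyc /= (mulrn_modn _ xd0) mulrnDr.
have cyc_inj : injective cyc.
  apply: (additive_inj cycD) => a ax0; apply/val_inj => /=.
  by case: (posnP a) => // a0; have := xj a; rewrite a0 ltn_ord => /(_ isT).
pose one : 'I_d.+1 := inZp 1.
have cyc1 : cyc one = x by rewrite /cyc /= (mulrn_modn _ xd0).
pose w := p \o cyc.
pose q (v : 'I_d.+1 * 'I_d.+1) := (w v.1 + w v.2) / 2.
have qv : is_value q := value_mean (value_comp pv cycD cyc_inj).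
have qb : bounded_by r_one q.
  by move=> v; have := pb (cyc v.1); have := pb (cyc v.2); rewrite /q /w /=; lra.
have qN := exponent_cond_pair (exponent_cond_ord dN).
pose diag (v : 'I_d.+1 * 'I_d.+1) := v.1 = v.2.
have diag_sub : is_subgroup diag by split=> // u v; rewrite /diag /= => -> ->.
pose phi (v : 'I_d.+1 * 'I_d.+1) := cyc v.1.
have phiD u v : diag u -> diag v -> phi (u + v) = phi u + phi v by move=> *; exact: cycD.
have phi_iso u v : diag u -> diag v -> p (phi u - phi v) = q (u - v).
  by rewrite /diag /phi /q /w /= => <- <-; rewrite -(additiveB cycD); lra.
have [psi [psiD [psi_phi psi_q]]] := G2 _ _ qv qb qN _ diag_sub phi phiD phi_iso _ e0 e1.
have psi_torsion v : torsion (psi v).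
  exists d.+1; split=> //; rewrite -(additiveMn psiD).
  by rewrite (exponent_cond_pair (exponent_cond_ord (dvdnn _))) // (additive0 psiD).
have w0 : w 0 = 0 by rewrite /w /= /cyc mulr0n value0.
exists (psi (one, 0)), (psi (0, one)); split=> //.
- by have [_] := psi_q (one, 0); rewrite /q /= w0 /w /= cyc1; lra.
- by have [_] := psi_q (0, one); rewrite /q /= w0 /w /= cyc1; lra.
- rewrite -psiD [psi _](_ : _ = psi (one, one)); last first.
    by congr psi; congr (_, _); rewrite ?addr0 ?add0r.
  by rewrite -{1}cyc1; exact: (psi_phi (one, one) erefl).
Qed.

Section ContinuousImage.
Variables (G' : zmodType) (p' : G' -> R) (f : G -> G').
Hypotheses (p'v : is_value p') (fD : forall x y, f (x + y) = f x + f y).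

(* Each halving step loses a factor [(1 + eps) / 2 <= 2 / 3] in [p] and the
   images at most triple, the error term staying in the ball sent into [p' < 1]. *)
Lemma Gr_one_torsion_image_le (delta eps : R) :
  (forall y, p y < delta -> p' (f y) < 1) ->
  0 < eps -> eps <= delta / 2 -> eps <= 1 / 3 ->
  forall k x, torsion x -> p x <= eps * (3 / 2) ^+ k -> p' (f x) <= 3 ^+ k.
Proof.
move=> f_small e0 e_delta e3; have pv : is_value p by case: Gp => [[]].
elim=> [|k IH] x xt px.
  by rewrite expr0 ltW // f_small //; move: px; rewrite expr0; lra.
have [y [z [yt zt py pz e]]] := Gr_one_halving xt e0 ltac:(lra).
have pow0 : 0 <= (3 / 2 : R) ^+ k by apply: exprn_ge0; lra.
have px0 := value_ge0 pv x; move: px; rewrite exprS => px.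
have fy := IH y yt ltac:(nra); have fz := IH z zt ltac:(nra).
have fe : p' (f (x - (y + z))) < 1 by apply: f_small; lra.
have -> : f x = f (x - (y + z)) + (f y + f z) by rewrite -!fD subrK.
have := valueD p'v (f (x - (y + z))) (f y + f z); have := valueD p'v (f y) (f z).
have : 1 <= (3 : R) ^+ k by apply: exprn_ege1; lra.
by rewrite exprS; lra.
Qed.

Lemma Gr_one_continuous_bounded :
  val_continuous p p' f -> exists B, forall x, p' (f x) <= B.
Proof.
move=> /(_ 0 1 ltr01) [delta [delta0 f_delta]].
have f_small y : p y < delta -> p' (f y) < 1.
  by rewrite -[y]subr0 => /f_delta; rewrite (additive0 fD) !subr0.
pose eps := Num.min (delta / 2) (1 / 3).
have e0 : 0 < eps by rewrite lt_min; apply/andP; split; lra.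
have [e_delta e3] : eps <= delta / 2 /\ eps <= 1 / 3.
  by have := lexx eps; rewrite {2}/eps le_min => /andP.
have [K hK] : exists K, 2 / eps <= (3 / 2) ^+ K by apply: exists_exprn_ge; lra.
have e_pow : 2 <= eps * (3 / 2) ^+ K by rewrite mulrC -ler_pdivrMr.
exists (3 ^+ K + 1) => x.
have [[pv [_ [_ [_ [pb _]]]]] _] := Gp.
have [y [yt xy]] := Gr_torsion_dense Gp x e0.
have py : p y <= eps * (3 / 2) ^+ K.
  by have := value_le_addB pv x y; have := pb x; lra.
have fy := Gr_one_torsion_image_le f_small e0 e_delta e3 yt py.
have fxy := f_small (x - y) ltac:(lra).
have -> : f x = f y + f (x - y) by rewrite -fD addrC subrK.
by have := valueD p'v (f y) (f (x - y)); lra.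
Qed.

End ContinuousImage.

End UnitBall.

Lemma Gr_one_Gr_inf_not_iso (N N' : nat) (G G' : zmodType) (p : G -> R)
    (p' : G' -> R) (f : G -> G') (g : G' -> G) :
  N' <> 1%N -> is_Gr r_one N p -> is_Gr r_inf N' p' ->
  (forall x y, f (x + y) = f x + f y) -> cancel g f -> val_continuous p p' f ->
  False.
Proof.
move=> N'1 Gp [[p'v _] [G2' _]] fD gK fc.
have [B fB] := Gr_one_continuous_bounded Gp p'v fD fc.
have [y By] := G2_inf_unbounded N'1 p'v G2' B.
by have := fB (g y); rewrite gK; lra.
Qed.

Theorem corollary5p8 (r r' : radius) (N N' : nat)
    (hN : N <> 1%N) (hN' : N' <> 1%N)
    (G G' : zmodType) (p : G -> R) (p' : G' -> R) :
  is_Gr r N p -> is_Gr r' N' p' ->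
  top_group_isomorphic p p' ->
  r = r' /\ N = N'.
Proof.
move=> Gp Gp' [f [g [fK [gK [fD [fc gc]]]]]].
have gD := cancel_additive fD fK gK.
split.
- case: r Gp; case: r' Gp' => // Gp' Gp; exfalso.
  + exact: Gr_one_Gr_inf_not_iso hN' Gp Gp' fD gK fc.
  + exact: Gr_one_Gr_inf_not_iso hN Gp' Gp gD fK gc.
- have EN := Gr_exact_exponent Gp; have EN' := Gr_exact_exponent Gp'.
  apply/eqP; rewrite eqn_dvd; apply/andP; split; apply: exact_exponent_dvdn.
  + exact: EN'.
  + exact: exact_exponent_iso fD fK gK EN.
  + exact: EN.
  + exact: exact_exponent_iso gD gK fK EN'.
Qed.
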